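(* Let $k$ be a number field, $\mathcal G$ a finite group, $H$ a finite abelian group, $\mu:\mathcal G\to\mathrm{Aut}(H)$ an action, and $\tau\in H$. Then $G_{k,\mu,\tau}$ is a subgroup of $\mathrm{Gal}(k(\zeta_{o(\tau)})/k)$.
   Context: $o(\tau)$ is the order of $\tau$ and $\zeta_t$ a primitive $t$-th root of unity. $\nu_{k,\tau}:\mathrm{Gal}(k(\zeta_{o(\tau)})/k)\to(\mathbb Z/o(\tau))^*$ is given by $g(\zeta_{o(\tau)})=\zeta_{o(\tau)}^{\nu_{k,\tau}(g)}$, and $G_{k,\mu,\tau}=\{g\in\mathrm{Gal}(k(\zeta_{o(\tau)})/k):\exists g_1\in\mathcal G,\ \mu(g_1)(\tau)=\tau^{\nu_{k,\tau}(g)}\}$. *)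

From HB Require Import structures.
From mathcomp Require Import all_boot all_order all_algebra all_fingroup all_solvable all_field.
Set Implicit Arguments. Unset Strict Implicit. Unset Printing Implicit Defensive.
Import GRing.Theory.
Local Open Scope ring_scope.

(* nu_{k,tau}(g): the exponent m (taken in 0 <= m < n) with g(zeta) = zeta^m,
   where zeta is a fixed primitive n-th root of unity, n = o(tau). *)
Definition nu_exp (L : splittingFieldType rat) (E : {subfield L}) (n : nat)
    (z : L) (g : gal_of E) : nat :=
  if [pick m : 'I_n | g z == z ^+ m] is Some m then val m else 0%N.

Definition G_kmutau (L : splittingFieldType rat) (k : {subfield L}) (z : L)
    (gT hT : finGroupType) (G : {group gT}) (mu : {morphism G >-> {perm hT}})
    (tau : hT) : {set gal_of <<k; z>>%VS} :=
  [set g in ('Gal(<<k; z>>%VS / k))%g |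
     [exists g1 in G, (mu g1 tau == tau ^+ nu_exp #[tau]%g z g)%g]].

From HB Require Import structures.
From mathcomp Require Import all_boot all_order all_algebra all_fingroup all_solvable all_field.
Set Implicit Arguments. Unset Strict Implicit. Unset Printing Implicit Defensive.
Import GRing.Theory.
Local Open Scope ring_scope.

(* The exponent map g |-> nu g is the cyclotomic character, hence
   multiplicative modulo o(tau), and G_{k,mu,tau} is its preimage of the set
   of exponents m for which tau^m lies in the mu(G)-orbit of tau.  That set
   contains 1 and is closed under products, because every mu(g1) is a group
   automorphism and therefore commutes with taking powers: if
   mu(g1)(tau) = tau^a and mu(h1)(tau) = tau^b, then
   mu(g1 h1)(tau) = mu(h1)(tau^a) = (mu(h1)(tau))^a = tau^(b a). *)

Section CyclotomicExponent.

Variables (L : splittingFieldType rat) (E : {subfield L}) (n : nat) (z : L).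
Hypothesis prim_z : n.-primitive_root z.

Lemma nu_expE (g : gal_of E) : g z = z ^+ nu_exp n z g.
Proof.
have gz_root : (g z) ^+ n = 1 by rewrite -rmorphXn (prim_expr_order prim_z) rmorph1.
have [i def_gz] := prim_rootP prim_z gz_root.
rewrite /nu_exp; case: pickP => [m /eqP -> // | no_m].
by have := no_m i; rewrite def_gz eqxx.
Qed.

Lemma nu_exp_mod (g : gal_of E) a :
  g z = z ^+ a -> nu_exp n z g = a %[mod n].
Proof. by move=> gz; apply/eqP; rewrite -(eq_prim_root_expr prim_z) -nu_expE gz. Qed.

Lemma nu_exp1 : nu_exp n z (1 : gal_of E)%g = 1 %[mod n].
Proof. by apply: nu_exp_mod; rewrite gal_id expr1. Qed.

Lemma nu_expM (x y : gal_of E) : z \in E ->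
  nu_exp n z (x * y)%g = (nu_exp n z y * nu_exp n z x)%N %[mod n].
Proof.
move=> Ez; apply: nu_exp_mod.
by rewrite galM // (nu_expE x) rmorphXn exprM -nu_expE.
Qed.

End CyclotomicExponent.

Lemma Aut_expg (hT : finGroupType) (H : {group hT}) (p : {perm hT}) (t : hT) m :
  p \in Aut H -> t \in H -> p (t ^+ m)%g = (p t ^+ m)%g.
Proof. by move=> AutHp Ht; rewrite -(autmE AutHp) (morphX (autm_morphism AutHp)). Qed.

Lemma expg_eq_mod_order (gT : finGroupType) (t : gT) a b :
  a = b %[mod #[t]%g] -> (t ^+ a = t ^+ b)%g.
Proof. by move=> eq_ab; apply/eqP; rewrite eq_expg_mod_order eq_ab. Qed.

Theorem mainTheorem16 (L : splittingFieldType rat) (k : {subfield L})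
    (gT hT : finGroupType) (G : {group gT}) (H : {group hT})
    (mu : {morphism G >-> {perm hT}}) (tau : hT) (z : L) :
  abelian H -> (mu @* G \subset Aut H)%g -> tau \in H ->
  (#[tau]%g).-primitive_root z ->
  (G_kmutau k z mu tau \subset 'Gal(<<k; z>>%VS / k)%g) &&
  group_set (G_kmutau k z mu tau).
Proof.
move=> _ muG_Aut Htau prim_z.
apply/andP; split; first by apply/subsetP => g; rewrite inE => /andP[].
apply/group_setP; split.
  rewrite inE group1 /=; apply/existsP; exists 1%g; rewrite group1 morph1 perm1 /=.
  by rewrite (expg_eq_mod_order (nu_exp1 _ prim_z)) expg1.
move=> x y; rewrite !inE => /andP[Galx /existsP[g1 /andP[Gg1 /eqP mu_g1]]].
move=> /andP[Galy /existsP[h1 /andP[Gh1 /eqP mu_h1]]].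
rewrite groupM //; apply/existsP; exists (g1 * h1)%g; rewrite groupM //=.
have Aut_muh1 : mu h1 \in Aut H by apply: (subsetP muG_Aut); apply: mem_morphim.
have nu_xy := nu_expM prim_z x y (memv_adjoin k z).
rewrite morphM // permM mu_g1 (Aut_expg _ Aut_muh1 Htau) mu_h1 -expgM.
by rewrite (expg_eq_mod_order nu_xy).
Qed.
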